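(* Fix the uniform prior $P$ on $\{1,\dots,n\}^T$, a utility function $u:\mathcal{Z}\times\mathcal{H}\to\mathbb{R}$, an amplitude $\lambda\ge0$ and a decay $\gamma\in(0,1)$. If Adaptive Sampling SGD is run for $T$ iterations, its posterior $Q$ satisfies $$D_{KL}(Q\|P)\le\sum_{t=2}^T\mathbb{E}_{(i_1,\dots,i_t)\sim Q}\frac{\lambda}{n}\sum_{i=1}^n\Bigg[\sum_{j=1}^{N_{i_t,t}}u(z_{i_t},h_{\tau_{i_t,j}})\gamma^{N_{i_t,t}-j}-\sum_{k=1}^{N_{i,t}}u(z_i,h_{\tau_{i,k}})\gamma^{N_{i,t}-k}\Bigg].$$
   Context: Adaptive Sampling SGD: inputs are examples $(z_1,\dots,z_n)\in\mathcal{Z}^n$, an initial hypothesis $h_0\in\mathcal{H}$, update rules $G_t:\mathcal{H}\times\mathcal{Z}\to\mathcal{H}$, utility $u$, amplitude $\lambda$, decay $\gamma$. Initialize weights $w_1=\dots=w_n=1$. For $t=1,\dots,T$: draw $i_t$ with conditional probability $Q_t(i)=Q(i_t=i\mid i_1,\dots,i_{t-1})=w_i/\sum_{j=1}^nw_j$; set $h_t=G_t(h_{t-1},z_{i_t})$; update $w_{i_t}\leftarrow w_{i_t}^{\gamma}\exp(\lambda u(z_{i_t},h_t))$. Output $h_T$. The posterior $Q$ is the resulting distribution of $(i_1,\dots,i_T)$ on $\{1,\dots,n\}^T$; $D_{KL}(Q\|P)=\mathbb{E}_{Q}\ln(Q/P)$. Notation: $N_{i,t}=|\{t'<t: i_{t'}=i\}|$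 is the number of times index $i$ was chosen before iteration $t$; $\tau_{i,j}$ is the $j$-th iteration at which $i$ was chosen. Sums with upper limit $0$ are $0$. *)

From Stdlib Require Import Reals List Arith.
Import ListNotations.
Open Scope R_scope.

(* Conventions: examples are indexed 0..n-1 (paper: 1..n), iterations are
   numbered 1..T as in the paper.  A run of the algorithm is determined by the
   sequence s = [i_1; ...; i_T] of chosen indices. *)

Definition sumR (f : nat -> R) (l : list nat) : R := fold_right Rplus 0 (map f l).
Definition prodR (f : nat -> R) (l : list nat) : R := fold_right Rmult 1 (map f l).

Fixpoint run_h {Z H : Type} (G : nat -> H -> Z -> H) (z : nat -> Z)
  (t : nat) (h : H) (s : list nat) : H :=
  match s with
  | [] => h
  | i :: s' => run_h G z (S t) (G t h (z i)) s'
  end.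

Definition hyp_at {Z H : Type} (G : nat -> H -> Z -> H) (z : nat -> Z) (h0 : H)
  (s : list nat) (k : nat) : H := run_h G z 1 h0 (firstn k s).

Fixpoint run_w {Z H : Type} (G : nat -> H -> Z -> H) (z : nat -> Z)
  (u : Z -> H -> R) (lam gam : R)
  (t : nat) (h : H) (w : nat -> R) (s : list nat) : nat -> R :=
  match s with
  | [] => w
  | i :: s' =>
      let h' := G t h (z i) in
      run_w G z u lam gam (S t) h'
        (fun j => if Nat.eqb j i then Rpower (w j) gam * exp (lam * u (z i) h') else w j) s'
  end.

Definition weights_at {Z H : Type} (G : nat -> H -> Z -> H) (z : nat -> Z)
  (u : Z -> H -> R) (lam gam : R) (h0 : H) (s : list nat) (t : nat) : nat -> R :=
  run_w G z u lam gam 1 h0 (fun _ => 1) (firstn (t - 1) s).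

Fixpoint all_seqs (n T : nat) : list (list nat) :=
  match T with
  | O => [[]]
  | S T' => flat_map (fun s => map (fun i => i :: s) (seq 0 n)) (all_seqs n T')
  end.

Definition posterior {Z H : Type} (G : nat -> H -> Z -> H) (z : nat -> Z)
  (u : Z -> H -> R) (lam gam : R) (h0 : H) (n T : nat) (s : list nat) : R :=
  prodR (fun t =>
           let w := weights_at G z u lam gam h0 s t in
           w (nth (t - 1) s 0%nat) / sumR w (seq 0 n)) (seq 1 T).

Definition uniform_prior (n T : nat) (s : list nat) : R := / (INR n ^ T).

Definition KL (n T : nat) (Q P : list nat -> R) : R :=
  fold_right Rplus 0 (map (fun s => Q s * ln (Q s / P s)) (all_seqs n T)).

Definition Ncount (s : list nat) (i t : nat) : nat :=
  count_occ Nat.eq_dec (firstn (t - 1) s) i.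

Fixpoint nth_occ (s : list nat) (i j pos : nat) : nat :=
  match s with
  | [] => O
  | x :: s' =>
      if Nat.eqb x i then
        (if Nat.eqb j 1 then pos else nth_occ s' i (j - 1) (S pos))
      else nth_occ s' i j (S pos)
  end.

Definition tau (s : list nat) (i j : nat) : nat := nth_occ s i j 1.

Definition accum {Z H : Type} (G : nat -> H -> Z -> H) (z : nat -> Z)
  (u : Z -> H -> R) (gam : R) (h0 : H) (s : list nat) (t i : nat) : R :=
  let N := Ncount s i t in
  sumR (fun j => u (z i) (hyp_at G z h0 s (tau s i j)) * gam ^ (N - j)) (seq 1 N).

From Stdlib Require Import Reals List Arith Lia Lra.
Import ListNotations.
Open Scope R_scope.

(* The weight of index i at the start of iteration t is exp(lam A_{i,t}), where
   A_{i,t} is the discounted utility sum [accum]: the update w <- w^gam exp(lam u)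
   is linear in ln w.  Hence Q_t(i_t) is a softmax of the lam A_{j,t}, and since
   the mean of exp(lam A_j) dominates exp of the mean (convexity of exp),
   ln(n Q_t(i_t)) <= lam/n sum_j (A_{i_t,t} - A_{j,t}).  Summing over t gives a
   pointwise bound on ln(Q/P); the t = 1 term vanishes because no utility has
   been accumulated yet.  Taking the Q-expectation and exchanging the sums over
   t and over runs yields the theorem. *)

Lemma sumR_ext f g l : (forall x, In x l -> f x = g x) -> sumR f l = sumR g l.
Proof. intros; unfold sumR; f_equal; apply map_ext_in; auto. Qed.

Lemma sumR_app f l1 l2 : sumR f (l1 ++ l2) = sumR f l1 + sumR f l2.
Proof. induction l1; unfold sumR in *; simpl; [lra|]. rewrite IHl1; lra. Qed.

Lemma sumR_mult_l c f l : c * sumR f l = sumR (fun x => c * f x) l.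
Proof. induction l; unfold sumR in *; simpl; [lra|]. rewrite <- IHl; lra. Qed.

Lemma sumR_plus f g l : sumR (fun x => f x + g x) l = sumR f l + sumR g l.
Proof. induction l; unfold sumR in *; simpl; [lra|]. rewrite IHl; lra. Qed.

Lemma sumR_minus f g l : sumR (fun x => f x - g x) l = sumR f l - sumR g l.
Proof. induction l; unfold sumR in *; simpl; [lra|]. rewrite IHl; lra. Qed.

Lemma sumR_const c l : sumR (fun _ => c) l = INR (length l) * c.
Proof.
  induction l; unfold sumR in *; simpl; [lra|].
  rewrite IHl; destruct (length l); simpl; lra.
Qed.

Lemma sumR_le f g l : (forall x, In x l -> f x <= g x) -> sumR f l <= sumR g l.
Proof.
  induction l; unfold sumR in *; simpl; intros; [lra|].
  apply Rplus_le_compat; auto.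
Qed.

Lemma sumR_pos f l : l <> [] -> (forall x, In x l -> 0 < f x) -> 0 < sumR f l.
Proof.
  induction l as [|x [|y l] IH]; intros Hl Hf; [congruence| |].
  - unfold sumR; simpl. specialize (Hf x (or_introl eq_refl)); lra.
  - change (0 < f x + sumR f (y :: l)).
    assert (0 < f x) by (apply Hf; left; auto).
    assert (0 < sumR f (y :: l)) by (apply IH; [discriminate | intros; apply Hf; right; auto]).
    lra.
Qed.

Lemma prodR_pos q l : (forall t, In t l -> 0 < q t) -> 0 < prodR q l.
Proof.
  induction l; unfold prodR in *; simpl; intros; [lra|].
  apply Rmult_lt_0_compat; auto.
Qed.

Lemma ln_prodR_pow q l c : 0 < c -> (forall t, In t l -> 0 < q t) ->
  ln (prodR q l * c ^ length l) = sumR (fun t => ln (c * q t)) l.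
Proof.
  intros Hc; induction l as [|t l IH]; unfold prodR, sumR in *; simpl; intros Hq.
  - rewrite Rmult_1_r; apply ln_1.
  - replace (q t * fold_right Rmult 1 (map q l) * (c * c ^ length l)) with
      ((c * q t) * (fold_right Rmult 1 (map q l) * c ^ length l)) by ring.
    rewrite ln_mult, IH; auto.
    + apply Rmult_lt_0_compat; auto.
    + apply Rmult_lt_0_compat; [apply (prodR_pos q l); auto | apply pow_lt; auto].
Qed.

Definition sumL {A : Type} (f : A -> R) (l : list A) : R := fold_right Rplus 0 (map f l).

Lemma sumL_le {A : Type} (f g : A -> R) l :
  (forall x, In x l -> f x <= g x) -> sumL f l <= sumL g l.
Proof.
  induction l; unfold sumL in *; simpl; intros; [lra|].
  apply Rplus_le_compat; auto.
Qed.

Lemma sumL_sumR_comm {A : Type} (F : nat -> A -> R) (ts : list nat) (L : list A) :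
  sumL (fun s => sumR (fun t => F t s) ts) L = sumR (fun t => sumL (F t) L) ts.
Proof.
  induction L as [|s L IH].
  - unfold sumL; simpl. rewrite sumR_const; lra.
  - change (sumR (fun t => F t s) ts + sumL (fun s => sumR (fun t => F t s) ts) L
            = sumR (fun t => F t s + sumL (F t) L) ts).
    rewrite IH, sumR_plus; reflexivity.
Qed.

Lemma all_seqs_nonempty_alphabet n T s :
  In s (all_seqs n T) -> (0 < n)%nat \/ T = 0%nat.
Proof.
  destruct T; simpl; auto. intros Hs.
  apply in_flat_map in Hs as [s' [_ Hs]].
  apply in_map_iff in Hs as [i [_ Hi]]. apply in_seq in Hi. lia.
Qed.

Lemma ln_le_of_le_exp x y : 0 < x -> x <= exp y -> ln x <= y.
Proof.
  intros Hx [Hlt | ->]; [|rewrite ln_exp; lra].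
  left; rewrite <- (ln_exp y); apply ln_increasing; auto.
Qed.

(* Jensen's inequality for exp, via the tangent line exp x >= exp m (1 + x - m). *)
Lemma exp_mean_le f l : l <> [] ->
  INR (length l) * exp (sumR f l / INR (length l)) <= sumR (fun x => exp (f x)) l.
Proof.
  intros Hl. set (k := INR (length l)).
  assert (Hk : 0 < k) by (apply lt_0_INR; destruct l; simpl; [congruence | lia]).
  set (m := sumR f l / k).
  assert (Htangent : forall x, exp m * (1 + (f x - m)) <= exp (f x)).
  { intros x. replace (exp (f x)) with (exp m * exp (f x - m))
      by (rewrite <- exp_plus; f_equal; ring).
    apply Rmult_le_compat_l; [left; apply exp_pos | apply exp_ineq1_le]. }
  assert (Hsum : sumR (fun x => exp m * (1 + (f x - m))) l = k * exp m).
  { rewrite <- sumR_mult_l, sumR_plus, sumR_minus, !sumR_const.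
    fold k; unfold m; field; lra. }
  rewrite <- Hsum. apply sumR_le; auto.
Qed.

Lemma ln_softmax_le (a : nat -> R) n i : (0 < n)%nat ->
  ln (INR n * (exp (a i) / sumR (fun j => exp (a j)) (seq 0 n)))
  <= sumR (fun j => a i - a j) (seq 0 n) / INR n.
Proof.
  intros Hn.
  assert (Hseq : seq 0 n <> []) by (destruct n; [lia | discriminate]).
  assert (Hk : 0 < INR n) by (apply lt_0_INR; auto).
  set (S := sumR (fun j => exp (a j)) (seq 0 n)).
  assert (HS : 0 < S) by (apply sumR_pos; auto; intros; apply exp_pos).
  pose proof (exp_mean_le a (seq 0 n) Hseq) as Hjensen. rewrite length_seq in Hjensen.
  fold S in Hjensen.
  apply ln_le_of_le_exp.
  - apply Rmult_lt_0_compat; [lra | apply Rdiv_lt_0_compat; [apply exp_pos | lra]].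
  - rewrite sumR_minus, sumR_const, length_seq.
    replace ((INR n * a i - sumR a (seq 0 n)) / INR n)
      with (a i + - (sumR a (seq 0 n) / INR n)) by (field; lra).
    rewrite exp_plus, exp_Ropp.
    set (E := exp (sumR a (seq 0 n) / INR n)) in *.
    assert (HE : 0 < E) by apply exp_pos.
    apply (Rmult_le_reg_r (S * E)); [apply Rmult_lt_0_compat; lra|].
    replace (INR n * (exp (a i) / S) * (S * E)) with (exp (a i) * (INR n * E))
      by (field; lra).
    replace (exp (a i) * / E * (S * E)) with (exp (a i) * S) by (field; lra).
    apply Rmult_le_compat_l; [left; apply exp_pos | exact Hjensen].
Qed.

Lemma nth_occ_lt p i j pos : (1 <= j <= count_occ Nat.eq_dec p i)%nat ->
  (nth_occ p i j pos < pos + length p)%nat.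
Proof.
  revert j pos; induction p as [|x p IH]; simpl; intros j pos Hj; [lia|].
  destruct (Nat.eq_dec x i) as [<-|ne].
  - rewrite Nat.eqb_refl. destruct (Nat.eqb_spec j 1); [lia|].
    specialize (IH (j - 1)%nat (S pos)); lia.
  - apply Nat.eqb_neq in ne; rewrite ne. specialize (IH j (S pos)); lia.
Qed.

Lemma nth_occ_app p q i j pos : (1 <= j <= count_occ Nat.eq_dec p i)%nat ->
  nth_occ (p ++ q) i j pos = nth_occ p i j pos.
Proof.
  revert j pos; induction p as [|x p IH]; simpl; intros j pos Hj; [lia|].
  destruct (Nat.eq_dec x i) as [<-|ne].
  - rewrite Nat.eqb_refl. destruct (Nat.eqb_spec j 1); [auto|]. apply IH; lia.
  - apply Nat.eqb_neq in ne; rewrite ne. apply IH; lia.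
Qed.

Lemma nth_occ_snoc_last p i pos :
  nth_occ (p ++ [i]) i (S (count_occ Nat.eq_dec p i)) pos = (pos + length p)%nat.
Proof.
  revert pos; induction p as [|x p IH]; simpl; intros pos.
  - rewrite Nat.eqb_refl; simpl; lia.
  - destruct (Nat.eq_dec x i) as [<-|ne].
    + rewrite Nat.eqb_refl; simpl. rewrite IH; lia.
    + apply Nat.eqb_neq in ne; rewrite ne, IH; lia.
Qed.

Lemma firstn_nth_occ_app p q i j : (1 <= j <= count_occ Nat.eq_dec p i)%nat ->
  firstn (nth_occ (p ++ q) i j 1) (p ++ q) = firstn (nth_occ p i j 1) p.
Proof.
  intros Hj. pose proof (nth_occ_lt p i j 1 Hj).
  rewrite nth_occ_app, firstn_app by auto.
  replace (nth_occ p i j 1 - length p)%nat with 0%nat by lia.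
  apply app_nil_r.
Qed.

Section Weights.

Variables (Z H : Type) (G : nat -> H -> Z -> H) (z : nat -> Z) (u : Z -> H -> R).
Variables (lam gam : R) (h0 : H).

Lemma run_h_app t h p q :
  run_h G z t h (p ++ q) = run_h G z (t + length p) (run_h G z t h p) q.
Proof.
  revert t h; induction p; simpl; intros; [f_equal; lia|].
  rewrite IHp; f_equal; lia.
Qed.

Lemma run_w_app t h w p q :
  run_w G z u lam gam t h w (p ++ q) =
  run_w G z u lam gam (t + length p) (run_h G z t h p) (run_w G z u lam gam t h w p) q.
Proof.
  revert t h w; induction p; simpl; intros; [f_equal; lia|].
  rewrite IHp; f_equal; lia.
Qed.

Lemma run_w_pos t h w p : (forall j, 0 < w j) -> forall j, 0 < run_w G z u lam gam t h w p j.
Proof.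
  revert t h w; induction p; simpl; intros; auto.
  apply IHp. intros k. destruct (k =? a)%nat; auto.
  apply Rmult_lt_0_compat; [unfold Rpower|]; apply exp_pos.
Qed.

(* [accum] with the prefix of the run passed explicitly: only i_1, ..., i_{t-1}
   matter, which makes the recursion on the run visible. *)
Definition discounted_utility (p : list nat) (i : nat) : R :=
  let N := count_occ Nat.eq_dec p i in
  sumR (fun j => u (z i) (run_h G z 1 h0 (firstn (nth_occ p i j 1) p)) * gam ^ (N - j))
       (seq 1 N).

Lemma accum_prefix s t i :
  accum G z u gam h0 s t i = discounted_utility (firstn (t - 1) s) i.
Proof.
  unfold accum, discounted_utility, Ncount, tau, hyp_at.
  set (p := firstn (t - 1) s).
  apply sumR_ext. intros j Hj. apply in_seq in Hj.
  rewrite <- (firstn_skipn (t - 1) s) at 1 2. fold p.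
  rewrite firstn_nth_occ_app by lia. reflexivity.
Qed.

Lemma accum_first s i : accum G z u gam h0 s 1 i = 0.
Proof. rewrite accum_prefix. reflexivity. Qed.

Lemma discounted_utility_snoc_same p i :
  discounted_utility (p ++ [i]) i =
  gam * discounted_utility p i + u (z i) (run_h G z 1 h0 (p ++ [i])).
Proof.
  unfold discounted_utility. rewrite count_occ_app; simpl.
  destruct (Nat.eq_dec i i) as [_|]; [|congruence].
  set (N := count_occ Nat.eq_dec p i).
  replace (N + 1)%nat with (S N) by lia.
  rewrite seq_S, sumR_app, sumR_mult_l.
  unfold sumR at 2; cbn [map fold_right].
  replace (1 + N)%nat with (S N) by lia.
  rewrite nth_occ_snoc_last, Nat.sub_diag, firstn_all2 by (rewrite length_app; simpl; lia).
  f_equal; [|simpl; ring].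
  apply sumR_ext. intros j Hj. apply in_seq in Hj.
  rewrite firstn_nth_occ_app by (unfold N in *; lia).
  replace (S N - j)%nat with (S (N - j)) by lia. simpl; ring.
Qed.

Lemma discounted_utility_snoc_other p x i : x <> i ->
  discounted_utility (p ++ [x]) i = discounted_utility p i.
Proof.
  intros ne. unfold discounted_utility. rewrite count_occ_app; simpl.
  destruct (Nat.eq_dec x i); [congruence|]. rewrite Nat.add_0_r.
  apply sumR_ext. intros j Hj. apply in_seq in Hj.
  rewrite firstn_nth_occ_app by lia. reflexivity.
Qed.

Lemma ln_run_w p i :
  ln (run_w G z u lam gam 1 h0 (fun _ => 1) p i) = lam * discounted_utility p i.
Proof.
  induction p as [|x p IH] using rev_ind.
  - unfold discounted_utility; simpl. rewrite ln_1. unfold sumR; simpl; ring.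
  - rewrite run_w_app; simpl.
    destruct (Nat.eqb_spec i x) as [->|ne].
    + pose proof (run_w_pos 1 h0 (fun _ => 1) p ltac:(intros; lra) x).
      rewrite ln_mult by (unfold Rpower; apply exp_pos).
      unfold Rpower. rewrite !ln_exp, IH, discounted_utility_snoc_same, run_h_app.
      simpl. replace (1 + length p)%nat with (S (length p)) by lia. ring.
    + rewrite discounted_utility_snoc_other by congruence. exact IH.
Qed.

Lemma weights_at_exp s t j :
  weights_at G z u lam gam h0 s t j = exp (lam * accum G z u gam h0 s t j).
Proof.
  unfold weights_at. rewrite accum_prefix, <- ln_run_w, exp_ln; auto.
  apply run_w_pos; intros; lra.
Qed.

Variable n : nat.

Definition step_prob (s : list nat) (t : nat) : R :=
  let w := weights_at G z u lam gam h0 s t in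
  w (nth (t - 1) s 0%nat) / sumR w (seq 0 n).

Hypothesis n_pos : (0 < n)%nat.

Lemma step_prob_pos s t : 0 < step_prob s t.
Proof.
  unfold step_prob. rewrite (sumR_ext _ (fun j => exp (lam * accum G z u gam h0 s t j)))
    by (intros; apply weights_at_exp).
  rewrite weights_at_exp. apply Rdiv_lt_0_compat; [apply exp_pos|].
  apply sumR_pos; [destruct n; [lia | discriminate] | intros; apply exp_pos].
Qed.

Lemma ln_step_prob_le s t :
  ln (INR n * step_prob s t) <=
  lam / INR n * sumR (fun i => accum G z u gam h0 s t (nth (t - 1) s 0%nat)
                              - accum G z u gam h0 s t i) (seq 0 n).
Proof.
  unfold step_prob. rewrite (sumR_ext _ (fun j => exp (lam * accum G z u gam h0 s t j)))
    by (intros; apply weights_at_exp).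
  rewrite weights_at_exp.
  eapply Rle_trans; [apply (ln_softmax_le (fun j => lam * accum G z u gam h0 s t j)); auto|].
  right.
  rewrite (sumR_ext _ (fun j => lam * (accum G z u gam h0 s t (nth (t - 1) s 0%nat)
                                       - accum G z u gam h0 s t j))) by (intros; ring).
  rewrite <- sumR_mult_l. unfold Rdiv; ring.
Qed.

Lemma ln_posterior_ratio_le T s :
  ln (posterior G z u lam gam h0 n T s / uniform_prior n T s) <=
  sumR (fun t => lam / INR n *
          sumR (fun i => accum G z u gam h0 s t (nth (t - 1) s 0%nat)
                         - accum G z u gam h0 s t i) (seq 0 n))
       (seq 2 (T - 1)).
Proof.
  assert (Hk : 0 < INR n) by (apply lt_0_INR; auto).
  unfold uniform_prior, Rdiv. rewrite Rinv_inv.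
  change (posterior G z u lam gam h0 n T s) with (prodR (step_prob s) (seq 1 T)).
  rewrite <- (length_seq T 1) at 2.
  rewrite ln_prodR_pow by (auto; intros; apply step_prob_pos).
  destruct T as [|T]; [unfold sumR; simpl; lra|].
  rewrite <- cons_seq. simpl (S T - 1)%nat. rewrite Nat.sub_0_r.
  change (ln (INR n * step_prob s 1) + sumR (fun t => ln (INR n * step_prob s t)) (seq 2 T)
          <= sumR (fun t => lam / INR n *
                 sumR (fun i => accum G z u gam h0 s t (nth (t - 1) s 0%nat)
                                - accum G z u gam h0 s t i) (seq 0 n)) (seq 2 T)).
  assert (Hfirst : ln (INR n * step_prob s 1) <= 0).
  { eapply Rle_trans; [apply ln_step_prob_le|].
    rewrite (sumR_ext _ (fun _ => 0)) by (intros; rewrite !accum_first; ring).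
    rewrite sumR_const; lra. }
  pose proof (sumR_le _ _ (seq 2 T) (fun t _ => ln_step_prob_le s t)). lra.
Qed.

End Weights.

Lemma kl_term_le (Z H : Type) (n T : nat) (z : nat -> Z) (h0 : H)
  (G : nat -> H -> Z -> H) (u : Z -> H -> R) (lam gam : R) s :
  (0 < n)%nat \/ T = 0%nat ->
  let Q := posterior G z u lam gam h0 n T in
  Q s * ln (Q s / uniform_prior n T s) <=
  Q s * sumR (fun t => lam / INR n *
                  sumR (fun i => accum G z u gam h0 s t (nth (t - 1) s 0%nat)
                                 - accum G z u gam h0 s t i) (seq 0 n))
             (seq 2 (T - 1)).
Proof.
  intros [Hn | ->] Q.
  - apply Rmult_le_compat_l; [|apply ln_posterior_ratio_le; auto].
    left. apply prodR_pos. intros; apply step_prob_pos; auto.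
  - unfold Q, posterior, uniform_prior, prodR, sumR; simpl.
    replace (1 / / 1) with 1 by field. rewrite ln_1; lra.
Qed.

Theorem theorem4 (Z H : Type) (n T : nat) (z : nat -> Z) (h0 : H)
  (G : nat -> H -> Z -> H) (u : Z -> H -> R) (lam gam : R)
  (Hlam : 0 <= lam) (Hgam : 0 < gam < 1) :
  KL n T (posterior G z u lam gam h0 n T) (uniform_prior n T)
  <= sumR (fun t =>
       fold_right Rplus 0
         (map (fun s =>
                 posterior G z u lam gam h0 n T s *
                 (lam / INR n *
                  sumR (fun i =>
                          accum G z u gam h0 s t (nth (t - 1) s 0%nat)
                          - accum G z u gam h0 s t i) (seq 0 n)))
              (all_seqs n T)))
     (seq 2 (T - 1)).
Proof.
  unfold KL.
  change (fold_right Rplus 0 (map ?f (all_seqs n T))) with (sumL f (all_seqs n T)).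
  change (fun t => sumL ?F (all_seqs n T)) with (fun t => sumL (F t) (all_seqs n T)).
  rewrite <- sumL_sumR_comm.
  apply sumL_le. intros s Hs.
  rewrite <- sumR_mult_l.
  apply kl_term_le, (all_seqs_nonempty_alphabet n T s Hs).
Qed.
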